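(* Let $\mathcal{F}$ be a family of topological radicals, let $\mathcal{P}\in\mathcal{F}$ satisfy $\Sigma_\beta\le\mathcal{P}$, and let $\mathcal{G}=\mathcal{F}\setminus\{\mathcal{P}\}$. Then $(\mathtt{H}_{\mathcal{F}})^a\le\mathcal{P}^a\ast\mathtt{H}_{\mathcal{G}}$ and $((\mathtt{H}_{\mathcal{F}})^a)^\ast=(\mathcal{P}^a\ast\mathtt{H}_{\mathcal{G}})^\ast$.
   Context: All algebras are Banach algebras. An ideal map assigns to each $A$ a two-sided ideal; a closed ideal map assigns a closed one. A topological radical is a closed ideal map $\mathcal{P}$ such that: $f(\mathcal{P}(A))\subseteq\mathcal{P}(B)$ for continuous surjective homomorphisms $f:A\to B$; $\mathcal{P}(A/\mathcal{P}(A))=0$; $\mathcal{P}(\mathcal{P}(A))=\mathcal{P}(A)$; for each closed ideal $J$ of $A$, $\mathcal{P}(J)$ is an ideal of $A$ contained in $\mathcal{P}(A)$. $\mathcal{P}\le\mathcal{R}$ means $\mathcal{P}(A)\subseteq\mathcal{R}(A)$ for all $A$. $\mathtt{H}_{\mathcal{F}}(A)=\overline{\sum_{\mathcal{R}\in\mathcal{F}}\mathcal{R}(A)}$ (the zero ideal if the family is empty). For an ideal map $\mathcal{P}$ and closed ideal map $\mathcal{R}$, $(\mathcal{P}\ast\mathcal{R})(A)=q^{-1}(\mathcal{P}(A/\mathcal{R}(A)))$ with $q$ the quotient map. $\Sigma_a(A)$ is the sum of all commutative ideals of $A$, $\Sigma_\beta(A)$ the sum of all nilpotent ideals; $\mathcal{P}^a=\Sigma_a\ast\mathcal{P}$.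 Convolution procedure: for a closed ideal map $\mathcal{R}$, set $I_0=0$, $I_{\alpha+1}=q_{I_\alpha}^{-1}(\mathcal{R}(A/I_\alpha))$, $I_\beta=\overline{\bigcup_{\alpha<\beta}I_\alpha}$ for limit $\beta$; $\mathcal{R}^\ast(A)$ is the ideal at which this chain stabilizes. *)

From HB Require Import structures.
From mathcomp Require Import all_boot all_order all_algebra.
From mathcomp Require Import all_classical all_reals all_analysis.
From mathcomp Require Import complex.
Set Implicit Arguments. Unset Strict Implicit. Unset Printing Implicit Defensive.
Import Order.TTheory GRing.Theory Num.Theory ComplexField.
Import numFieldNormedType.Exports.
Local Open Scope classical_set_scope.
Local Open Scope ring_scope.

Section BanachAlgebras.
Variable R : realType.
Local Notation C := (R[i]).

Record banach_algebra := BanachAlgebra {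
  ba_sort :> normedModType C;
  ba_mul : ba_sort -> ba_sort -> ba_sort;
  ba_mulA : forall x y z, ba_mul x (ba_mul y z) = ba_mul (ba_mul x y) z;
  ba_mulDl : forall x y z, ba_mul (x + y) z = ba_mul x z + ba_mul y z;
  ba_mulDr : forall x y z, ba_mul x (y + z) = ba_mul x y + ba_mul x z;
  ba_mulZl : forall (a : C) x y, ba_mul (a *: x) y = a *: ba_mul x y;
  ba_mulZr : forall (a : C) x y, ba_mul x (a *: y) = a *: ba_mul x y;
  ba_normM : forall x y, `|ba_mul x y| <= `|x| * `|y|;
  ba_complete : forall F : set_system ba_sort, ProperFilter F -> cauchy F -> cvg F
}.

Definition is_hom (A B : banach_algebra) (f : A -> B) :=
  [/\ forall x y, f (x + y) = f x + f y,
      forall (a : C) x, f (a *: x) = a *: f x &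
      forall x y, f (ba_mul x y) = ba_mul (f x) (f y)].

Definition is_ideal (A : banach_algebra) (I : set A) :=
  [/\ I 0,
      forall x y, I x -> I y -> I (x + y),
      forall (a : C) x, I x -> I (a *: x) &
      forall a x, I x -> I (ba_mul a x) /\ I (ba_mul x a)].

Definition is_closed_ideal (A : banach_algebra) (I : set A) :=
  is_ideal I /\ closed I.

Definition ideal_map := forall A : banach_algebra, set A.

Definition is_ideal_map (P : ideal_map) := forall A, is_ideal (P A).
Definition is_closed_ideal_map (P : ideal_map) := forall A, is_closed_ideal (P A).

Definition le_imap (P Q : ideal_map) := forall A, P A `<=` Q A.

(* q : A -> B presents B as the quotient A / I : a continuous surjective
   homomorphism with kernel I (by the open mapping theorem B is then
   topologically isomorphic to A / I). *)
Definition is_quotient_map (A B : banach_algebra) (I : set A) (q : A -> B) :=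
  [/\ is_hom q, continuous q, (forall y, exists x, q x = y) &
      q @^-1` [set 0] = I].

(* j : B -> A presents the closed ideal J of A as a Banach algebra:
   a continuous injective homomorphism with range J. *)
Definition is_ideal_embedding (A B : banach_algebra) (J : set A) (j : B -> A) :=
  [/\ is_hom j, continuous j, injective j & range j = J].

Definition is_topological_radical (P : ideal_map) :=
  [/\ is_closed_ideal_map P,
      (forall (A B : banach_algebra) (f : A -> B), is_hom f -> continuous f ->
          (forall y, exists x, f x = y) -> f @` P A `<=` P B),
      (forall (A B : banach_algebra) (q : A -> B),
          is_quotient_map (P A) q -> P B = [set 0]),
      (forall (A B : banach_algebra) (j : B -> A),
          is_ideal_embedding (P A) j -> j @` P B = P A) &
      (forall (A B : banach_algebra) (J : set A) (j : B -> A),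
          is_closed_ideal J -> is_ideal_embedding J j ->
          is_ideal (j @` P B) /\ j @` P B `<=` P A)].

Definition sum_family (A : banach_algebra) (S : set (set A)) : set A :=
  [set x | exists s : seq A,
      (forall y, y \in s -> exists2 I, S I & I y) /\ x = \sum_(y <- s) y].

(* families of ideal maps are predicates ideal_map -> Prop
   (the classical [set] type lives in too small a universe) *)
Definition H_fam (F : ideal_map -> Prop) : ideal_map := fun A =>
  closure (sum_family (fun I : set A => exists2 P, F P & I = P A)).

Definition is_commutative_ideal (A : banach_algebra) (I : set A) :=
  is_ideal I /\ (forall x y, I x -> I y -> ba_mul x y = ba_mul y x).

Definition is_nilpotent_ideal (A : banach_algebra) (I : set A) :=
  is_ideal I /\ exists n : nat, forall (x : A) (s : seq A),
    I x -> (forall y, y \in s -> I y) -> size s = n -> foldl (@ba_mul A) x s = 0.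

Definition Sigma_a : ideal_map := fun A =>
  sum_family [set I | @is_commutative_ideal A I].

Definition Sigma_beta : ideal_map := fun A =>
  sum_family [set I | @is_nilpotent_ideal A I].

(* (P * R)(A) = q^{-1}(P(A / R(A))) *)
Definition iconv (P Q : ideal_map) : ideal_map := fun A =>
  [set x : A | forall (B : banach_algebra) (q : A -> B),
     is_quotient_map (Q A) q -> P B (q x)].

Definition a_map (P : ideal_map) : ideal_map := iconv Sigma_a P.

(* Convolution procedure. One step: I |-> q_I^{-1}(Rm(A/I)) (closed when Rm is
   closed; we take the closure, which changes nothing for closed Rm). *)
Definition conv_step (Rm : ideal_map) (A : banach_algebra) (I : set A) : set A :=
  closure [set x : A | forall (B : banach_algebra) (q : A -> B),
                          is_quotient_map I q -> Rm B (q x)].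

(* The transfinite chain I_alpha, encoded ordinal-free as the smallest family
   containing 0, closed under the step and under closures of unions. *)
Inductive conv_tower (Rm : ideal_map) (A : banach_algebra) : set A -> Prop :=
| conv_tower_step I : @conv_tower Rm A I -> @conv_tower Rm A (@conv_step Rm A I)
| conv_tower_lim (S : set (set A)) : S `<=` @conv_tower Rm A ->
    @conv_tower Rm A (closure ([set 0] `|` \bigcup_(I in S) I)).

(* Rm^*(A): the ideal at which the chain stabilizes (its largest member). *)
Definition conv_star (Rm : ideal_map) : ideal_map := fun A =>
  closure ([set 0] `|` \bigcup_(I in @conv_tower Rm A) I).

End BanachAlgebras.

From HB Require Import structures.
From mathcomp Require Import all_boot all_order all_algebra.
From mathcomp Require Import all_classical all_reals all_analysis.
From mathcomp Require Import complex.
From mathcomp.algebra_tactics Require Import lra.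
Set Implicit Arguments. Unset Strict Implicit. Unset Printing Implicit Defensive.
Import Order.TTheory GRing.Theory Num.Theory ComplexField.
Import numFieldNormedType.Exports.
Local Open Scope classical_set_scope.
Local Open Scope ring_scope.
Local Open Scope complex_scope.

(* The maps iconv M N and conv_step quantify over all presentations
   q : A -> A / I of a quotient, so the proof rests on an explicit
   construction of the quotient Banach algebra A / J by a closed ideal J
   (cosets normed by the distance to J, completeness via fast Cauchy
   sequences) and on its universal property: continuous surjective
   homomorphisms killing J factor continuously through A / J.  The convolution tower is a chain of closed ideals, which
   yields an induction principle for conv_star; from it we derive that the
   convolution procedure is monotone and that R2^* <= R1^* whenever R2
   vanishes on every algebra on which R1 vanishes.  The proposition follows:
   the inclusion holds because the quotient of A / H_G(A) by P factors
   through A / H_F(A), and the equality from monotonicity together with the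
   transfer of vanishing. *)

(* The norm of a complex normed space takes values in R[i]; for the metric
   estimates below it is convenient to work with its real part. *)
Definition rnorm (R : realType) (V : normedModType R[i]) (v : V) : R :=
  complex.Re `|v|.

Section RealNorm.
Variable R : realType.
Variable V : normedModType R[i].
Implicit Types u v w : V.

Lemma normE v : `|v| = (rnorm v)%:C.
Proof. by rewrite /rnorm RRe_real // normr_real. Qed.

Lemma rnorm_ge0 v : 0 <= rnorm v.
Proof. by rewrite -ler0c -normE normr_ge0. Qed.

Lemma rnorm0 : rnorm (0 : V) = 0.
Proof. by rewrite /rnorm normr0. Qed.

Lemma rnorm_eq0 v : rnorm v = 0 -> v = 0.
Proof. by move=> h; apply/normr0_eq0; rewrite normE h. Qed.

Lemma rnormD u v : rnorm (u + v) <= rnorm u + rnorm v.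
Proof. by rewrite -lecR rmorphD /= -!normE ler_normD. Qed.

Lemma rnormN v : rnorm (- v) = rnorm v.
Proof. by rewrite /rnorm normrN. Qed.

Lemma rnormB_sym u v : rnorm (u - v) = rnorm (v - u).
Proof. by rewrite -rnormN opprB. Qed.

Lemma rnormB_tri u v w : rnorm (u - w) <= rnorm (u - v) + rnorm (v - w).
Proof. by rewrite -(subrKA v u (- w)) rnormD. Qed.

Lemma rnormZ (a : R[i]) v : rnorm (a *: v) = rnorm (a : R[i]^o) * rnorm v.
Proof. by apply: complexI; rewrite rmorphM /= -!normE normrZ. Qed.

Lemma gt0_complexE (e : R[i]) : 0 < e -> e = (complex.Re e)%:C /\ 0 < complex.Re e.
Proof.
move=> e0; have er : e \is Num.real by apply: gtr0_real.
by split; [rewrite RRe_real | rewrite -ltcR RRe_real].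
Qed.

Lemma ball_rnorm v w (e : R) : ball v e%:C w <-> rnorm (v - w) < e.
Proof. by rewrite -ball_normE /= normE ltcR. Qed.

Lemma closure_rnorm (S : set V) v :
  closure S v <-> forall e, 0 < e -> exists w, S w /\ rnorm (v - w) < e.
Proof.
split.
  move=> cl e e0; have : nbhs v (ball v e%:C) by apply: nbhsx_ballx; rewrite ltcR.
  by move=> /cl [w [Sw /ball_rnorm vw]]; exists w.
move=> h B /nbhs_ballP [e e0 sB].
have [eE e'0] := gt0_complexE e0.
have [w [Sw vw]] := h _ e'0; exists w; split => //; apply: sB; rewrite eE; exact/ball_rnorm.
Qed.

Lemma closure0_eq (v : V) : closure [set 0] v -> v = 0.
Proof.
move/closure_rnorm => h; apply: rnorm_eq0; apply: contrapT => /eqP nv.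
have /h [w [-> hw]] : 0 < rnorm v by rewrite lt0r nv rnorm_ge0.
by rewrite subr0 ltxx in hw.
Qed.

End RealNorm.

Section Continuity.
Variable R : realType.
Variables V W : normedModType R[i].

Lemma continuous_rnormP (f : V -> W) :
  continuous f <-> forall v e, 0 < e ->
    exists2 d, 0 < d & forall w, rnorm (v - w) < d -> rnorm (f v - f w) < e.
Proof.
split=> [fc v e e0|h v].
  have /cvgrPdist_lt /(_ e%:C) := fc v; rewrite ltcR => /(_ e0) /nbhs_ballP [d d0 hd].
  have [dE d'0] := gt0_complexE d0; exists (complex.Re d) => // w vw.
  have := hd w; rewrite dE => /(_ (proj2 (ball_rnorm _ _ _) vw)).
  by rewrite /= normE ltcR.
apply/cvgrPdist_lt => e e0; have [-> e'0] := gt0_complexE e0.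
have [d d0 hd] := h v _ e'0.
apply/nbhs_ballP; exists d%:C; first by rewrite /= ltcR.
by move=> w /ball_rnorm /hd; rewrite /= normE ltcR.
Qed.

Lemma continuous_closure (f : V -> W) (S : set V) (T : set W) :
  continuous f -> (forall v, S v -> T (f v)) -> forall v, closure S v -> closure T (f v).
Proof.
move=> /continuous_rnormP fc hST v /closure_rnorm hv; apply/closure_rnorm => e e0.
have [d d0 hd] := fc v e e0; have [w [Sw vw]] := hv _ d0.
by exists (f w); split; [apply: hST | apply: hd].
Qed.

End Continuity.

Section AlgebraLemmas.
Variable R : realType.
Variable A : banach_algebra R.
Implicit Types x y z : A.

Lemma rnormM x y : rnorm (ba_mul x y) <= rnorm x * rnorm y.
Proof. by rewrite -lecR rmorphM /= -!normE ba_normM. Qed.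

Lemma ba_mul0l y : ba_mul (0 : A) y = 0.
Proof. by apply: (addIr (ba_mul (0 : A) y)); rewrite add0r -ba_mulDl addr0. Qed.

Lemma ba_mul0r y : ba_mul y (0 : A) = 0.
Proof. by apply: (addIr (ba_mul y (0 : A))); rewrite add0r -ba_mulDr addr0. Qed.

Lemma ba_mulBl x y z : ba_mul (x - y) z = ba_mul x z - ba_mul y z.
Proof. by apply/eqP; rewrite eq_sym subr_eq -ba_mulDl subrK. Qed.

Lemma ba_mulBr x y z : ba_mul z (x - y) = ba_mul z x - ba_mul z y.
Proof. by apply/eqP; rewrite eq_sym subr_eq -ba_mulDr subrK. Qed.

End AlgebraLemmas.

Section IdealLemmas.
Variable R : realType.
Variable A : banach_algebra R.
Variable I : set A.
Hypothesis HI : is_ideal I.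
Implicit Types x y z : A.

Lemma ideal0 : I 0. Proof. by case: HI. Qed.
Lemma idealD x y : I x -> I y -> I (x + y). Proof. by case: HI => _ h _ _; apply: h. Qed.
Lemma idealZ (a : R[i]) x : I x -> I (a *: x). Proof. by case: HI => _ _ h _; apply: h. Qed.
Lemma idealN x : I x -> I (- x). Proof. by move=> /(idealZ (-1)); rewrite scaleN1r. Qed.
Lemma idealB x y : I x -> I y -> I (x - y). Proof. by move=> ? ?; apply/idealD/idealN. Qed.
Lemma idealMl a x : I x -> I (ba_mul a x). Proof. by move=> hx; case: HI => _ _ _ /(_ a x hx) []. Qed.
Lemma idealMr a x : I x -> I (ba_mul x a). Proof. by move=> hx; case: HI => _ _ _ /(_ a x hx) []. Qed.

Lemma idealBC x y : I (x - y) -> I (y - x). Proof. by move=> /idealN; rewrite opprB. Qed.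
Lemma idealB_trans x y z : I (x - y) -> I (y - z) -> I (x - z).
Proof. by move=> h1 h2; have := idealD h1 h2; rewrite subrKA. Qed.

End IdealLemmas.

Section HomLemmas.
Variable R : realType.
Variables (A B : banach_algebra R) (f : A -> B).
Hypothesis hf : is_hom f.

Lemma homD x y : f (x + y) = f x + f y. Proof. by case: hf. Qed.
Lemma homZ (a : R[i]) x : f (a *: x) = a *: f x. Proof. by case: hf. Qed.
Lemma homM x y : f (ba_mul x y) = ba_mul (f x) (f y). Proof. by case: hf. Qed.
Lemma hom0 : f 0 = 0. Proof. by apply: (addIr (f 0)); rewrite -homD !add0r. Qed.
Lemma homN x : f (- x) = - f x. Proof. by rewrite -scaleN1r homZ scaleN1r. Qed.
Lemma homB x y : f (x - y) = f x - f y. Proof. by rewrite homD homN. Qed.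

Lemma hom_sum (s : seq A) : f (\sum_(y <- s) y) = \sum_(y <- map f s) y.
Proof. by rewrite big_map; apply: (big_morph f homD hom0). Qed.

End HomLemmas.

Lemma hom_comp (R : realType) (A B D : banach_algebra R) (f : A -> B) (g : B -> D) :
  is_hom f -> is_hom g -> is_hom (g \o f).
Proof.
move=> hf hg; split => /= [x y|a x|x y]; by rewrite ?(homD hf) ?(homD hg)
  ?(homZ hf) ?(homZ hg) ?(homM hf) ?(homM hg).
Qed.

Definition halfpow (R : realType) (n : nat) : R := (2^-1) ^+ n.

Section FastCauchy.
Variable R : realType.
Local Notation halfpow := (@halfpow R).

Lemma halfpow_gt0 n : 0 < halfpow n.
Proof. by rewrite /halfpow exprn_gt0 // invr_gt0. Qed.

Lemma halfpowS n : halfpow n = 2 * halfpow n.+1.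
Proof. by rewrite /halfpow exprS mulrA mulfV ?mul1r. Qed.

Lemma halfpow_small (r : R) : 0 < r -> exists N, forall n, (N <= n)%N -> halfpow n < r.
Proof.
move=> r0; have h : `|2^-1 : R| < 1 by rewrite ger0_norm ?invr_gt0 // invf_lt1 // ltr1n.
have /cvgr_dist_lt /(_ r r0) [N _ hN] := cvg_expr h.
by exists N => n /hN; rewrite /= sub0r normrN ger0_norm // ltW // halfpow_gt0.
Qed.

Variable A : banach_algebra R.
Variable y : nat -> A.
Hypothesis y_fast : forall n, rnorm (y n - y n.+1) < 2 * halfpow n.

Lemma fast_tail_bound n k : rnorm (y n - y (n + k)%N) <= 4 * halfpow n - 4 * halfpow (n + k)%N.
Proof.
elim: k => [|k IH]; first by rewrite addn0 !subrr rnorm0.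
have := rnormB_tri (y n) (y (n + k)%N) (y (n + k).+1).
have := y_fast (n + k)%N; have := halfpowS (n + k)%N; rewrite addnS; lra.
Qed.

Lemma fast_cauchy_limit : exists l : A, forall N, rnorm (l - y N) <= 4 * halfpow N.
Proof.
have ycvg : cvg (y @ \oo).
  apply: ba_complete; apply: cauchy_exP => eps eps0; have [eE e0] := gt0_complexE eps0.
  have [N hN] := halfpow_small (divr_gt0 e0 (ltr0n R 4)); exists (y N); rewrite eE.
  exists N => // m /= Nm; apply/ball_rnorm.
  have := fast_tail_bound N (m - N)%N; rewrite subnKC // => h.
  have := hN N (leqnn N); have := halfpow_gt0 m; lra.
exists (lim (y @ \oo)) => N; apply/ler_addgt0Pr => d d0.
have /cvgrPdist_lt /(_ d%:C) := ycvg; rewrite ltcR => /(_ d0) [M _ hM].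
have := hM (maxn M N) (leq_maxl M N); rewrite /= normE ltcR => h1.
have := fast_tail_bound N (maxn M N - N)%N; rewrite subnKC ?leq_maxr // => h2.
have := rnormB_tri (lim (y @ \oo)) (y (maxn M N)) (y N).
rewrite (rnormB_sym (y (maxn M N))); have := halfpow_gt0 (maxn M N); lra.
Qed.

End FastCauchy.

(* A closed ideal, packaged so that the quotient construction can depend on it. *)
Record cideal (R : realType) (A : banach_algebra R) :=
  CIdeal { ci_set : set A; ci_prop : is_closed_ideal ci_set }.

(* Cosets are
   represented by canonical representatives chosen in each congruence class;
   the norm of a coset is the distance of a representative to J. *)
Section Quotient.
Variable R : realType.
Variable A : banach_algebra R.
Variable I : cideal A.
Local Notation J := (ci_set I).
Let HJ : is_ideal J := proj1 (ci_prop I).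
Let HJc : closed J := proj2 (ci_prop I).

Definition cong (x y : A) : bool := `[< J (x - y) >].

Lemma cong_ex x : exists y, cong x y.
Proof. by exists x; apply/asboolP; rewrite subrr; apply: ideal0. Qed.

Definition qrep (x : A) : A := xchoose (cong_ex x).

Lemma qrep_cong x : J (x - qrep x).
Proof. exact/asboolP/(xchooseP (cong_ex x)). Qed.

Lemma qrep_eq x y : J (x - y) -> qrep x = qrep y.
Proof.
move=> hxy; apply: eq_xchoose => z; rewrite /cong.
by apply/asboolP/asboolP => h; [apply: (idealB_trans HJ (idealBC HJ hxy)) | apply: (idealB_trans HJ hxy)].
Qed.

Lemma qrep_idem x : qrep (qrep x) == qrep x.
Proof. by apply/eqP/qrep_eq/(idealBC HJ)/qrep_cong. Qed.

Record qt := Qt { qval : A; qvalP : qrep qval == qval }.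

HB.instance Definition _ := [isSub for qval].
HB.instance Definition _ := [Choice of qt by <:].

Definition qpi (x : A) : qt := Qt (qrep_idem x).

Lemma qvalK a : qpi (qval a) = a.
Proof. by apply: val_inj => /=; apply/eqP/qvalP. Qed.

Lemma qpi_cong x : J (x - qval (qpi x)).
Proof. exact: qrep_cong. Qed.

Lemma qpi_eqP x y : qpi x = qpi y <-> J (x - y).
Proof.
split => [h|h]; last by apply: val_inj => /=; apply: qrep_eq.
have := idealBC HJ (qpi_cong y); rewrite -h; exact: idealB_trans (qpi_cong x).
Qed.

Definition qadd (a b : qt) := qpi (qval a + qval b).
Definition qopp (a : qt) := qpi (- qval a).
Definition qscale (k : R[i]) (a : qt) := qpi (k *: qval a).

Lemma qaddE x y : qadd (qpi x) (qpi y) = qpi (x + y).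
Proof.
apply/qpi_eqP; have := idealD HJ (idealBC HJ (qpi_cong x)) (idealBC HJ (qpi_cong y)).
by rewrite opprD addrACA.
Qed.

Lemma qoppE x : qopp (qpi x) = qpi (- x).
Proof. by apply/qpi_eqP; rewrite opprK addrC; apply: qpi_cong. Qed.

Lemma qscaleE k x : qscale k (qpi x) = qpi (k *: x).
Proof. by apply/qpi_eqP; rewrite -scalerBr; apply/(idealZ HJ)/(idealBC HJ)/qpi_cong. Qed.

Lemma qaddA : associative qadd.
Proof. by move=> a b c; rewrite -[a]qvalK -[b]qvalK -[c]qvalK !qaddE addrA. Qed.
Lemma qaddC : commutative qadd.
Proof. by move=> a b; rewrite -[a]qvalK -[b]qvalK !qaddE addrC. Qed.
Lemma qadd0 : left_id (qpi 0) qadd.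
Proof. by move=> a; rewrite -[a]qvalK qaddE add0r. Qed.
Lemma qaddN : left_inverse (qpi 0) qopp qadd.
Proof. by move=> a; rewrite -[a]qvalK qoppE qaddE addNr. Qed.

HB.instance Definition _ := GRing.isZmodule.Build qt qaddA qaddC qadd0 qaddN.

Lemma qpiD x y : qpi (x + y) = qpi x + qpi y.
Proof. exact: (esym (qaddE x y)). Qed.

Lemma qscaleA a b v : qscale a (qscale b v) = qscale (a * b) v.
Proof. by rewrite -[v]qvalK !qscaleE scalerA. Qed.
Lemma qscale1 : left_id 1 qscale.
Proof. by move=> v; rewrite -[v]qvalK qscaleE scale1r. Qed.
Lemma qscaleDr : right_distributive qscale +%R.
Proof. by move=> a u v; rewrite -[u]qvalK -[v]qvalK -qpiD !qscaleE -qpiD scalerDr. Qed.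
Lemma qscaleDl v : {morph qscale^~ v: a b / a + b}.
Proof. by move=> a b; rewrite -[v]qvalK !qscaleE -qpiD scalerDl. Qed.

HB.instance Definition _ :=
  GRing.Zmodule_isLmodule.Build R[i] qt qscaleA qscale1 qscaleDr qscaleDl.

Lemma qpiZ (k : R[i]) x : qpi (k *: x) = k *: qpi x.
Proof. exact: (esym (qscaleE k x)). Qed.
Lemma qpiN x : qpi (- x) = - qpi x.
Proof. exact: (esym (qoppE x)). Qed.
Lemma qpiB x y : qpi (x - y) = qpi x - qpi y.
Proof. by rewrite qpiD qpiN. Qed.
Lemma qpi_ker x : qpi x = 0 <-> J x.
Proof. by rewrite -[0]/(qpi 0) qpi_eqP subr0. Qed.

Definition qdist (x : A) : R := inf [set rnorm (x - j) | j in J].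

Lemma qdist_le x j : J j -> qdist x <= rnorm (x - j).
Proof. by move=> Jj; apply: ge_inf; [exists 0 => _ [? _ <-]; apply: rnorm_ge0 | exists j]. Qed.

Lemma qdist_glb x c : (forall j, J j -> c <= rnorm (x - j)) -> c <= qdist x.
Proof.
by move=> h; apply: lb_le_inf; [exists (rnorm (x - 0)), 0; first exact: ideal0 | move=> _ [j Jj <-]; apply: h].
Qed.

Lemma qdist_ge0 x : 0 <= qdist x.
Proof. by apply: qdist_glb => j _; apply: rnorm_ge0. Qed.

Lemma qdist_le_rnorm x : qdist x <= rnorm x.
Proof. by have := qdist_le x (ideal0 HJ); rewrite subr0. Qed.

Lemma qdist_approx x e : 0 < e -> exists j, J j /\ rnorm (x - j) < qdist x + e.
Proof.
move=> e0; have hne : [set rnorm (x - j) | j in J] !=set0 by exists (rnorm (x - 0)), 0; first exact: ideal0.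
have hlb : has_lbound [set rnorm (x - j) | j in J] by exists 0 => _ [j _ <-]; apply: rnorm_ge0.
by have [_ [j Jj <-] h] := inf_adherent e0 (conj hne hlb); exists j.
Qed.

Lemma qdist_glbM x c m : 0 <= m -> (forall j, J j -> c <= m * rnorm (x - j)) -> c <= m * qdist x.
Proof.
rewrite le0r => /orP [/eqP ->|m0] h; first by have := h 0 (ideal0 HJ); rewrite !mul0r.
by rewrite -ler_pdivrMl //; apply: qdist_glb => j Jj; rewrite ler_pdivrMl //; apply: h.
Qed.

Lemma qdist_cong x y : J (x - y) -> qdist x = qdist y.
Proof.
have qdist_le_cong xx yy : J (xx - yy) -> qdist yy <= qdist xx.
  move=> hxy; apply: qdist_glb => j Jj; have := qdist_le yy (idealB HJ Jj hxy).
  by rewrite opprB addrA [yy + _]addrC subrK.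
by move=> hxy; apply/le_anti; rewrite !qdist_le_cong //; apply: idealBC.
Qed.

Lemma qdist_qpi x : qdist (qval (qpi x)) = qdist x.
Proof. exact/qdist_cong/(idealBC HJ)/qpi_cong. Qed.

Lemma qdistD x y : qdist (x + y) <= qdist x + qdist y.
Proof.
rewrite -lerBlDr; apply: qdist_glb => j1 J1; rewrite lerBlDr [rnorm _ + _]addrC -lerBlDr.
apply: qdist_glb => j2 J2; rewrite lerBlDr [rnorm _ + _]addrC.
by apply: le_trans (qdist_le _ (idealD HJ J1 J2)) _; rewrite opprD addrACA rnormD.
Qed.

Lemma qdistZ_le (k : R[i]) x : qdist (k *: x) <= rnorm (k : R[i]^o) * qdist x.
Proof.
apply: qdist_glbM => [|j Jj]; first exact: rnorm_ge0.
by rewrite -rnormZ scalerBr; apply/qdist_le/(idealZ HJ).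
Qed.

Lemma qdistZ (k : R[i]) x : qdist (k *: x) = rnorm (k : R[i]^o) * qdist x.
Proof.
apply/le_anti; rewrite qdistZ_le /=.
have [->|k0] := eqVneq k 0; first by rewrite rnorm0 mul0r qdist_ge0.
have nk0 : 0 < rnorm (k : R[i]^o).
  by rewrite lt0r rnorm_ge0 andbT; apply: contra_neq k0; apply: rnorm_eq0.
have nkV : rnorm (k^-1 : R[i]^o) = (rnorm (k : R[i]^o))^-1.
  by apply: complexI; rewrite fmorphV /= -!normE normfV.
have := qdistZ_le k^-1 (k *: x); rewrite scalerA mulVf // scale1r nkV.
by rewrite -(ler_pM2l nk0) mulrA mulfV ?mul1r // gt_eqF.
Qed.

Lemma qdistM x y : qdist (ba_mul x y) <= qdist x * qdist y.
Proof.
rewrite mulrC; apply: qdist_glbM => [|j1 J1]; first exact: qdist_ge0.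
rewrite mulrC; apply: qdist_glbM => [|j2 J2]; first exact: rnorm_ge0.
apply: le_trans (rnormM _ _).
have -> : ba_mul (x - j1) (y - j2) = ba_mul x y - (ba_mul x j2 + ba_mul j1 (y - j2)).
  by rewrite ba_mulBl ba_mulBr opprD addrA.
by apply: qdist_le; apply: (idealD HJ); [apply: (idealMl HJ) | apply: (idealMr HJ)].
Qed.

Lemma qdist0_ideal x : qdist x = 0 -> J x.
Proof.
move=> d0; rewrite ((closure_id J).1 HJc); apply/closure_rnorm => e e0.
by have [j [Jj hj]] := qdist_approx x e0; exists j; rewrite d0 add0r in hj.
Qed.

Definition qnorm (a : qt) : R[i] := (qdist (qval a))%:C.

Lemma qnormD a b : qnorm (a + b) <= qnorm a + qnorm b.
Proof. by rewrite -[a]qvalK -[b]qvalK -qpiD /qnorm !qdist_qpi -rmorphD /= lecR qdistD. Qed.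

Lemma qnormZ (l : R[i]) a : qnorm (l *: a) = `|l| * qnorm a.
Proof. by rewrite -[a]qvalK -qpiZ /qnorm !qdist_qpi qdistZ rmorphM /= -normE. Qed.

Lemma qnorm_eq0 a : qnorm a = 0 -> a = 0.
Proof. by move=> /(congr1 (@complex.Re R)) /qdist0_ideal /qpi_ker; rewrite qvalK. Qed.

HB.instance Definition _ := Lmodule_isNormed.Build R[i] qt qnormD qnormZ qnorm_eq0.

Lemma rnorm_qpi x : rnorm (qpi x) = qdist x.
Proof. exact: qdist_qpi. Qed.

Definition qmul (a b : qt) : qt := qpi (ba_mul (qval a) (qval b)).

Lemma qmulE x y : qmul (qpi x) (qpi y) = qpi (ba_mul x y).
Proof.
apply/qpi_eqP; rewrite -(subrKA (ba_mul x (qval (qpi y)))) -ba_mulBr -ba_mulBl.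
by apply: (idealD HJ); [apply: (idealMr HJ) | apply: (idealMl HJ)]; apply/(idealBC HJ)/qpi_cong.
Qed.

Lemma qmulA x y z : qmul x (qmul y z) = qmul (qmul x y) z.
Proof. by rewrite -[x]qvalK -[y]qvalK -[z]qvalK !qmulE ba_mulA. Qed.
Lemma qmulDl x y z : qmul (x + y) z = qmul x z + qmul y z.
Proof. by rewrite -[x]qvalK -[y]qvalK -[z]qvalK -qpiD !qmulE -qpiD ba_mulDl. Qed.
Lemma qmulDr x y z : qmul x (y + z) = qmul x y + qmul x z.
Proof. by rewrite -[x]qvalK -[y]qvalK -[z]qvalK -qpiD !qmulE -qpiD ba_mulDr. Qed.
Lemma qmulZl (a : R[i]) x y : qmul (a *: x) y = a *: qmul x y.
Proof. by rewrite -[x]qvalK -[y]qvalK -qpiZ !qmulE -qpiZ ba_mulZl. Qed.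
Lemma qmulZr (a : R[i]) x y : qmul x (a *: y) = a *: qmul x y.
Proof. by rewrite -[x]qvalK -[y]qvalK -qpiZ !qmulE -qpiZ ba_mulZr. Qed.
Lemma qnormM x y : `|qmul x y| <= `|x| * `|y|.
Proof.
by rewrite -[x]qvalK -[y]qvalK qmulE !normE !rnorm_qpi -rmorphM /= lecR qdistM.
Qed.

Lemma lift_fast_sequence (c : nat -> qt) :
  (forall n, rnorm (c n - c n.+1) < 2 * halfpow R n) ->
  exists y : nat -> A, (forall n, qpi (y n) = c n) /\
    forall n, rnorm (y n - y n.+1) < 2 * halfpow R n.
Proof.
move=> c_fast.
have hj n : exists j, J j /\ rnorm (qval (c n) - qval (c n.+1) - j) < 2 * halfpow R n.
  have := c_fast n; rewrite -[c n]qvalK -[c n.+1]qvalK -qpiB rnorm_qpi !qvalK => hn.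
  set X := qval (c n) - qval (c n.+1).
  have e0 : 0 < 2 * halfpow R n - qdist X by rewrite subr_gt0.
  by have [j [Jj hj]] := qdist_approx X e0; exists j; split => //; lra.
have [j hjP] := choice hj.
exists (fun n => qval (c n) + \sum_(k < n) j k); split => n.
  rewrite -[RHS]qvalK; apply/qpi_eqP; rewrite addrAC subrr add0r.
  by apply: (big_ind (fun z => J z)); [exact: (ideal0 HJ) | exact: (idealD HJ) | move=> k _; case: (hjP k)].
rewrite big_ord_recr /= addrA opprD addrA [qval (c n.+1) + _]addrC addrKA.
by case: (hjP n).
Qed.

(* A / J is complete: a Cauchy filter yields a fast Cauchy sequence of cosets,
   which lifts to A and converges there. *)
Lemma qcomplete (F : set_system qt) : ProperFilter F -> cauchy F -> cvg F.
Proof.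
move=> FF /(cauchyP F) Fc.
have hc n : exists c, F (ball c (halfpow R n)%:C) by apply: Fc; rewrite ltcR halfpow_gt0.
have [c hcF] := choice hc.
have c_fast n : rnorm (c n - c n.+1) < 2 * halfpow R n.
  have [z [/ball_rnorm z1 /ball_rnorm z2]] := filter_ex (filterI (hcF n) (hcF n.+1)).
  have := rnormB_tri (c n) z (c n.+1); rewrite (rnormB_sym z).
  have := halfpowS R n; have := halfpow_gt0 R n.+1; lra.
have [y [yc y_fast]] := lift_fast_sequence c_fast.
have [l hl] := fast_cauchy_limit y_fast.
apply/cvg_ex; exists (qpi l); apply/fcvgrPdist_lt => eps eps0.
have [eE e0] := gt0_complexE eps0.
have [N hN] := halfpow_small (divr_gt0 e0 (ltr0n R 5)); have hNN := hN N (leqnn N).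
apply: filterS (hcF N) => z /ball_rnorm hz; rewrite eE normE ltcR.
have := rnormB_tri (qpi l) (qpi (y N)) z; rewrite -qpiB rnorm_qpi yc.
have := qdist_le_rnorm (l - y N); have := hl N; lra.
Qed.

Definition qalg : banach_algebra R :=
  @BanachAlgebra R qt qmul qmulA qmulDl qmulDr qmulZl qmulZr qnormM qcomplete.

Definition qmap : A -> qalg := qpi.

Lemma qmap_hom : is_hom qmap.
Proof. by split; [exact: qpiD | exact: qpiZ | move=> x y; rewrite /qmap -qmulE]. Qed.

Lemma qmap_cont : continuous qmap.
Proof.
apply/continuous_rnormP => x e e0; exists e => // y h.
by rewrite -qpiB [rnorm _]rnorm_qpi; apply: le_lt_trans h; exact: qdist_le_rnorm.
Qed.

Lemma qmap_quot : is_quotient_map J qmap.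
Proof.
split; [exact: qmap_hom | exact: qmap_cont | by move=> u; exists (qval u); apply: qvalK |].
by apply/seteqP; split => x /qpi_ker.
Qed.

End Quotient.

Section Factor.
Variable R : realType.
Variables (A : banach_algebra R) (I : cideal A).
Local Notation J := (ci_set I).
Variables (B : banach_algebra R) (f : A -> B).
Hypothesis hf : is_hom f.
Hypothesis fJ : forall x, J x -> f x = 0.

Definition qfact (u : qalg I) : B := f (qval u).

Lemma qfactE x : qfact (qmap I x) = f x.
Proof.
apply/eqP; rewrite -subr_eq0 -(homB hf); apply/eqP/fJ.
exact/(idealBC (proj1 (ci_prop I)))/qpi_cong.
Qed.

Lemma qfact_hom : is_hom qfact.
Proof.
split=> [u v|a u|u v].
- by rewrite -[u]qvalK -[v]qvalK -qpiD -!/(qmap I _) !qfactE homD.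
- by rewrite -[u]qvalK -qpiZ -!/(qmap I _) !qfactE homZ.
- by rewrite -[u]qvalK -[v]qvalK /= qmulE -!/(qmap I _) !qfactE homM.
Qed.

Lemma qfact_surj : (forall y, exists x, f x = y) -> forall y, exists u, qfact u = y.
Proof. by move=> fs y; have [x <-] := fs y; exists (qmap I x); apply: qfactE. Qed.

Lemma qfact_cont : continuous f -> continuous qfact.
Proof.
move=> /continuous_rnormP fc; apply/continuous_rnormP => u e e0.
have [d d0 hd] := fc (qval u) e e0; exists d => // v.
rewrite -[u]qvalK -[v]qvalK -qpiB rnorm_qpi !qvalK => hv.
have d1 : 0 < d - qdist I (qval u - qval v) by rewrite subr_gt0.
have [j [Jj hj]] := qdist_approx I (qval u - qval v) d1.
have : rnorm (qval u - (qval v + j)) < d by rewrite opprD addrA; lra.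
by move/hd; rewrite /qfact (homD hf) (fJ Jj) addr0.
Qed.

End Factor.

Definition universal_quotient (R : realType) (A B : banach_algebra R) (J : set A) (q : A -> B) :=
  is_quotient_map J q /\
  forall (D : banach_algebra R) (f : A -> D), is_hom f -> (forall x, J x -> f x = 0) ->
    exists g : B -> D, [/\ is_hom g, forall x, g (q x) = f x,
      ((forall y, exists x, f x = y) -> forall y, exists u, g u = y) &
      (continuous f -> continuous g)].

Lemma quotient_exists (R : realType) (A : banach_algebra R) (J : set A) :
  is_closed_ideal J -> exists (B : banach_algebra R) (q : A -> B), universal_quotient J q.
Proof.
move=> hJ; pose I := CIdeal hJ; exists (qalg I), (qmap I); split; first exact: qmap_quot.
move=> D f hf fJ; exists (@qfact _ _ I _ f); split.
- exact: qfact_hom.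
- exact: qfactE.
- exact: qfact_surj.
- exact: qfact_cont.
Qed.

Lemma lipschitz_continuous (R : realType) (V W : normedModType R[i]) (f : V -> W) (k : R) :
  0 <= k -> (forall v w, rnorm (f v - f w) <= k * rnorm (v - w)) -> continuous f.
Proof.
move=> k0 hf; apply/continuous_rnormP => v e e0.
have k1 : 0 < k + 1 by rewrite ltr_wpDl.
exists (e / (k + 1)) => [|w]; first by rewrite divr_gt0.
rewrite ltr_pdivlMr // => h; apply: le_lt_trans (hf v w) _.
have := rnorm_ge0 (v - w); nra.
Qed.

Section IdealConstructions.
Variable R : realType.
Variable A : banach_algebra R.

Lemma sum_family_map (S : set (set A)) (g : A -> A) :
  g 0 = 0 -> {morph g : x y / x + y} -> (forall I x, S I -> I x -> I (g x)) ->
  forall x, sum_family S x -> sum_family S (g x).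
Proof.
move=> g0 gD gS x [s [hs ->]]; exists (map g s); split; last by rewrite big_map (big_morph g gD g0).
by move=> _ /mapP [z zs ->]; have [I SI Iz] := hs z zs; exists I => //; apply: gS Iz.
Qed.

Lemma sum_family_ideal (S : set (set A)) : (forall I, S I -> is_ideal I) -> is_ideal (sum_family S).
Proof.
move=> hS; split.
- by exists [::]; rewrite big_nil.
- move=> _ _ [s1 [h1 ->]] [s2 [h2 ->]]; exists (s1 ++ s2); rewrite big_cat; split => //.
  by move=> z; rewrite mem_cat => /orP [/h1|/h2].
- move=> a x; apply: (@sum_family_map S (fun z => a *: z)) => [|u v|I z SI]; first exact: scaler0.
    exact: scalerDr.
  exact: (idealZ (hS I SI)).
- move=> a x hx; split.
    apply: (@sum_family_map S (ba_mul a) (ba_mul0r a) (ba_mulDr a) _ _ hx) => I z SI.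
    exact: (idealMl (hS I SI)).
  apply: (@sum_family_map S (fun z => ba_mul z a) (ba_mul0l a) (fun y z => ba_mulDl y z a) _ _ hx).
  by move=> I z SI; apply: (idealMr (hS I SI)).
Qed.

Lemma addl_continuous (a : A) : continuous (fun x : A => x + a).
Proof. by apply: (@lipschitz_continuous _ _ _ _ 1) => // v w; rewrite mul1r opprD addrACA subrr addr0. Qed.

Lemma addr_continuous (a : A) : continuous (fun x : A => a + x).
Proof. by apply: (@lipschitz_continuous _ _ _ _ 1) => // v w; rewrite mul1r opprD addrACA subrr add0r. Qed.

Lemma scale_continuous (k : R[i]) : continuous (fun x : A => k *: x).
Proof. by apply: (lipschitz_continuous (rnorm_ge0 (k : R[i]^o))) => v w; rewrite -scalerBr rnormZ. Qed.

Lemma mull_continuous (a : A) : continuous (ba_mul a).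
Proof. by apply: (lipschitz_continuous (rnorm_ge0 a)) => v w; rewrite -ba_mulBr rnormM. Qed.

Lemma mulr_continuous (a : A) : continuous (fun x => ba_mul x a).
Proof.
apply: (lipschitz_continuous (rnorm_ge0 a)) => v w.
by rewrite -ba_mulBl mulrC rnormM.
Qed.

Lemma closure_id_closure (S : set A) : closure S = closure (closure S).
Proof. exact/closure_id/closed_closure. Qed.

(* The closure of an ideal is an ideal: each operation is continuous and
   maps I into I, hence maps closure I into closure I. *)
Lemma closure_ideal (I : set A) : is_ideal I -> is_ideal (closure I).
Proof.
move=> hI; split.
- exact: subset_closure (ideal0 hI).
- move=> x y cx cy; rewrite [closure I]closure_id_closure.
  apply: (continuous_closure (T := closure I) (@addr_continuous x) _ cy) => z Iz.
  by apply: (continuous_closure (T := I) (@addl_continuous z) _ cx) => w Iw; apply: idealD.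
- by move=> a x; apply: (continuous_closure (T := I) (@scale_continuous a)) => z; apply: idealZ.
- move=> a x cx; split.
    by apply: (continuous_closure (T := I) (@mull_continuous a) _ cx) => z; apply: idealMl.
  by apply: (continuous_closure (T := I) (@mulr_continuous a) _ cx) => z; apply: idealMr.
Qed.

End IdealConstructions.

Section StableMaps.
Variable R : realType.

Definition hom_stable (M : ideal_map R) := forall (A B : banach_algebra R) (f : A -> B),
  is_hom f -> continuous f -> (forall y, exists x, f x = y) -> forall x, M A x -> M B (f x).

Lemma image_ideal (A B : banach_algebra R) (f : A -> B) (I : set A) :
  is_hom f -> (forall y, exists x, f x = y) -> is_ideal I -> is_ideal (f @` I).
Proof.
move=> hf fs hI; split.
- by exists 0; [apply: ideal0 | apply: hom0].
- by move=> _ _ [x Ix <-] [y Iy <-]; exists (x + y); [apply: idealD | apply: homD].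
- by move=> a _ [x Ix <-]; exists (a *: x); [apply: idealZ | apply: homZ].
- move=> b _ [x Ix <-]; have [a <-] := fs b.
  by split; [exists (ba_mul a x); [apply: idealMl | apply: homM] | exists (ba_mul x a); [apply: idealMr | apply: homM]].
Qed.

Lemma Sigma_a_ideal (A : banach_algebra R) : is_ideal (@Sigma_a R A).
Proof. by apply: sum_family_ideal => I []. Qed.

(* The image of a commutative ideal under a surjective homomorphism is a
   commutative ideal, so Sigma_a is carried forward. *)
Lemma Sigma_a_stable : hom_stable (@Sigma_a R).
Proof.
move=> A B f hf _ fs x [s [hs ->]]; exists (map f s); split; last exact: hom_sum.
move=> _ /mapP [z zs ->]; have [I [hI Icom] Iz] := hs z zs.
exists (f @` I); last by exists z.
split; first exact: image_ideal.
by move=> _ _ [u Iu <-] [v Iv <-]; rewrite -!(homM hf) Icom.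
Qed.

Lemma radical_stable (Q : ideal_map R) : is_topological_radical Q -> hom_stable Q.
Proof. by case=> _ hQ _ _ _ A B f hf fc fs x Qx; apply: (hQ A B f hf fc fs); exists x. Qed.

Lemma radical_closed_ideal (Q : ideal_map R) :
  is_topological_radical Q -> is_closed_ideal_map Q.
Proof. by case. Qed.

End StableMaps.

Section QuotientPreimage.
Variable R : realType.

Lemma quot_ker (A B : banach_algebra R) (I : set A) (q : A -> B) :
  is_quotient_map I q -> forall z, I z <-> q z = 0.
Proof. by case=> _ _ _ hk z; rewrite -hk. Qed.

(* qpre M I = q_I^-1 (M (A / I)), for every presentation q_I of A / I.
   In particular iconv M N A = qpre M (N A) and conv_step M A I = closure (qpre M I). *)
Definition qpre (M : ideal_map R) (A : banach_algebra R) (I : set A) : set A :=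
  [set x | forall (B : banach_algebra R) (q : A -> B), is_quotient_map I q -> M B (q x)].

Variable M : ideal_map R.
Arguments M : clear implicits.
Hypothesis M_ideal : forall B : banach_algebra R, is_ideal (M B).

Lemma qpre_ideal (A : banach_algebra R) (I : set A) : is_ideal (qpre M I).
Proof.
split.
- by move=> B q [hq _ _ _]; rewrite (hom0 hq); apply: ideal0.
- move=> x y hx hy B q hq; case: (hq) => h _ _ _; rewrite (homD h).
  by apply: (idealD (M_ideal B)); [apply: hx | apply: hy].
- move=> a x hx B q hq; case: (hq) => h _ _ _; rewrite (homZ h).
  exact: (idealZ (M_ideal B)) (hx B q hq).
- move=> a x hx; split=> B q hq; case: (hq) => h _ _ _; rewrite (homM h).
    exact: (idealMl (M_ideal B)) (hx B q hq).
  exact: (idealMr (M_ideal B)) (hx B q hq).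
Qed.

Lemma qpre_sub (A : banach_algebra R) (I : set A) : I `<=` qpre M I.
Proof. by move=> x Ix B q hq; rewrite ((quot_ker hq x).1 Ix); apply: (ideal0 (M_ideal B)). Qed.

(* If I is the zero ideal, the identity presents A / I. *)
Lemma qpre_zero (A : banach_algebra R) (I : set A) : I = [set 0] -> qpre M I `<=` M A.
Proof.
move=> I0 x /(_ A id); apply; split.
- by [].
- by apply: (@lipschitz_continuous _ _ _ _ 1) => // v w; rewrite mul1r.
- by move=> y; exists y.
- by rewrite I0; apply/seteqP; split.
Qed.

Hypothesis M_stable : hom_stable M.

Lemma stable_sub_qpre (A : banach_algebra R) (I : set A) : M A `<=` qpre M I.
Proof. by move=> x Mx B q [hq qc qs _]; apply: M_stable. Qed.

Lemma qpre_hom (A D : banach_algebra R) (I : set A) (f : A -> D) :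
  is_closed_ideal I -> is_hom f -> continuous f -> (forall y, exists x, f x = y) ->
  (forall z, I z -> f z = 0) -> forall x, qpre M I x -> M D (f x).
Proof.
move=> hI hf fc fs fI x hx; have [B [q [hq univ]]] := quotient_exists hI.
have [g [hg gq gs gc]] := univ _ _ hf fI.
by rewrite -gq; apply: (M_stable hg (gc fc) (gs fs)); apply: hx.
Qed.

Lemma qpre_universal (A B : banach_algebra R) (I : set A) (q : A -> B) :
  universal_quotient I q -> forall x, M B (q x) -> qpre M I x.
Proof.
move=> [hq univ] x Mx B' q' hq'; case: (hq') => hh qc qs _.
have [g [hg gq gs gc]] := univ _ _ hh (fun z => (quot_ker hq' z).1).
by rewrite -gq; apply: (M_stable hg (gc qc) (gs qs)).
Qed.

Lemma qpre_mono (A : banach_algebra R) (I K : set A) :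
  is_closed_ideal I -> I `<=` K -> qpre M I `<=` qpre M K.
Proof.
move=> hI IK x hx B q hq; case: (hq) => hh qc qs _.
by move: hx; apply: (qpre_hom hI hh qc qs) => z /IK /(quot_ker hq).
Qed.

End QuotientPreimage.

Lemma iconv_stable (R : realType) (M N : ideal_map R) :
  hom_stable M -> is_closed_ideal_map N -> hom_stable N -> hom_stable (iconv M N).
Proof.
move=> sM hN sN A B f hf fc fs x hx B' q' hq'; case: (hq') => hq qc qs _.
move: hx; apply: (qpre_hom sM (hN A) (hom_comp hf hq)).
- exact: (fun z => continuous_comp (fc z) (qc (f z))).
- by move=> y; have [b <-] := qs y; have [a <-] := fs b; exists a.
- by move=> z /(sN _ _ _ hf fc fs) /(quot_ker hq').
Qed.

Lemma chain_union_ideal (R : realType) (A : banach_algebra R) (S : set (set A)) :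
  (forall I, S I -> is_ideal I) -> (forall I K, S I -> S K -> I `<=` K \/ K `<=` I) ->
  is_ideal ([set 0] `|` \bigcup_(I in S) I).
Proof.
move=> hS chS; have mem : forall I x, S I -> I x -> ([set 0] `|` \bigcup_(I in S) I) x.
  by move=> I x SI Ix; right; exists I.
split.
- by left.
- move=> x y [-> | [I SI Ix]] [-> | [K SK Ky]]; rewrite ?add0r ?addr0; first by left.
  + exact: mem K y SK Ky.
  + exact: mem I x SI Ix.
  + have [IK|KI] := chS I K SI SK.
      by apply: (mem K _ SK); apply: (idealD (hS K SK)) => //; apply: IK.
    by apply: (mem I _ SI); apply: (idealD (hS I SI)) => //; apply: KI.
- move=> a x [-> | [I SI Ix]]; first by left; rewrite scaler0.
  exact: mem I _ SI (idealZ (hS I SI) a Ix).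
- move=> a x [-> | [I SI Ix]]; first by split; left; rewrite ?ba_mul0l ?ba_mul0r.
  split; apply: (mem I _ SI); [exact: (idealMl (hS I SI)) | exact: (idealMr (hS I SI))].
Qed.

Section Tower.
Variable R : realType.
Variable Rm : ideal_map R.
Arguments Rm : clear implicits.
Hypothesis Rm_ideal : forall B : banach_algebra R, is_ideal (Rm B).
Variable A : banach_algebra R.
Local Notation tower := (@conv_tower R Rm A).
Local Notation step := (@conv_step R Rm A).
Local Notation star := (@conv_star R Rm A).

Lemma step_infl I : I `<=` step I.
Proof. by move=> x /(qpre_sub Rm_ideal) Ix; apply: subset_closure. Qed.

Lemma tower_closed I : tower I -> closed I.
Proof. by case=> *; apply: closed_closure. Qed.

Lemma tower0 I : tower I -> I 0.
Proof. by elim=> [K _ K0|S _ _]; [apply: step_infl | apply: subset_closure; left]. Qed.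

Lemma tower_sup_le (S : set (set A)) K : tower K -> (forall I, S I -> I `<=` K) ->
  closure ([set 0] `|` \bigcup_(I in S) I) `<=` K.
Proof.
move=> TK h; have Kc := tower_closed TK; rewrite [X in _ `<=` X](closure_id K).1 //.
by apply: closureS => x [-> | [I SI Ix]]; [apply: tower0 | apply: h Ix].
Qed.

(* Comparability of tower members, by the classical argument for towers:
   call K extreme if step I <= K for every member I strictly below K; every
   member is extreme, and every member I is comparable with an extreme K,
   lying below K or above step K. *)
Definition extreme K := forall I, tower I -> I `<=` K -> I <> K -> step I `<=` K.

Lemma extreme_comparable K : tower K -> extreme K ->
  forall I, tower I -> I `<=` K \/ step K `<=` I.
Proof.
move=> TK eK I0; elim => [I TI [IK | KI] | S ST IH].
- have [->|neq] := pselect (I = K); first by right.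
  by left; apply: eK.
- by right; apply: subset_trans KI (@step_infl I).
- have [[J [SJ nJK]] | ne] := pselect (exists J, S J /\ ~ J `<=` K).
    have [//|KJ] := IH J SJ; right; apply: subset_trans KJ _ => x Jx.
    by apply: subset_closure; right; exists J.
  left; apply: tower_sup_le => // J SJ; apply: contrapT => nJK; apply: ne; by exists J.
Qed.

Lemma tower_extreme K : tower K -> extreme K.
Proof.
elim => [K' TK' eK' | S ST IH] I TI IK neq.
- have [IK'|KI] := extreme_comparable TK' eK' TI.
    have [->|neq'] := pselect (I = K'); first by [].
    exact: subset_trans (eK' I TI IK' neq') (@step_infl K').
  by exfalso; apply: neq; apply/seteqP; split.
- have [[J [SJ nJI]] | ne] := pselect (exists J, S J /\ ~ J `<=` I); last first.
    exfalso; apply: neq; apply/seteqP; split => //.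
    apply: tower_sup_le => // J SJ; apply: contrapT => nJI; apply: ne; by exists J.
  have [IJ|JI] := extreme_comparable (ST J SJ) (IH J SJ) TI; last first.
    by exfalso; apply: nJI; apply: subset_trans (@step_infl J) JI.
  have [eIJ|neqJ] := pselect (I = J); first by exfalso; apply: nJI; rewrite -eIJ.
  apply: subset_trans (IH J SJ I TI IJ neqJ) _ => x Jx.
  by apply: subset_closure; right; exists J.
Qed.

Lemma tower_chain I K : tower I -> tower K -> I `<=` K \/ K `<=` I.
Proof.
move=> TI TK; have [KI|IK] := extreme_comparable TI (tower_extreme TI) TK; first by right.
by left; apply: subset_trans (@step_infl I) IK.
Qed.

Lemma tower_cideal I : tower I -> is_closed_ideal I.
Proof.
move=> TI; split; last exact: tower_closed.
elim: TI => [K _ _ | S ST IH]; apply: closure_ideal; first exact: qpre_ideal.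
by apply: chain_union_ideal => // J K SJ SK; apply: tower_chain; apply: ST.
Qed.

Lemma star_tower : tower star.
Proof. exact: conv_tower_lim. Qed.

Lemma star_step : qpre Rm star `<=` star.
Proof.
move=> x hx; apply: subset_closure; right; exists (step star).
  exact/conv_tower_step/star_tower.
exact: subset_closure.
Qed.

Lemma star_le (T : set A) : closed T -> T 0 ->
  (forall I, tower I -> I `<=` T -> qpre Rm I `<=` T) -> star `<=` T.
Proof.
move=> Tc T0 hT; suff: forall I, tower I -> I `<=` T by apply; apply: star_tower.
move=> I0; elim => [K TK IH | S ST IH]; rewrite [X in _ `<=` X](closure_id T).1 //.
  exact/closureS/hT.
by apply: closureS => x [-> | [J SJ Jx]] //; exact: IH J SJ x Jx.
Qed.

End Tower.

Section StarComparison.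
Variable R : realType.
Variables R1 R2 : ideal_map R.
Arguments R1 : clear implicits.
Arguments R2 : clear implicits.
Hypothesis R1_ideal : forall B : banach_algebra R, is_ideal (R1 B).
Hypothesis R2_ideal : forall B : banach_algebra R, is_ideal (R2 B).
Hypothesis R1_stable : hom_stable R1.

Lemma star_mono : le_imap R1 R2 -> le_imap (conv_star R1) (conv_star R2).
Proof.
move=> le12 A; have [T2i T2c] := tower_cideal R2_ideal (star_tower R2 A).
apply: star_le; [exact: T2c | exact: ideal0 T2i | move=> I TI IT2 x hx].
apply: star_step => B q hq; apply: le12.
exact: (qpre_mono R1_stable (tower_cideal R1_ideal TI) IT2 hx).
Qed.

Hypothesis R2_stable : hom_stable R2.

(* If R2 vanishes wherever R1 does, then R2^* <= R1^*: the quotient by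
   R1^*(A) is R1-free, hence R2-free. *)
Lemma star_le_of_vanishing :
  (forall E : banach_algebra R, R1 E `<=` [set 0] -> R2 E `<=` [set 0]) ->
  le_imap (conv_star R2) (conv_star R1).
Proof.
move=> van A; have T1ci := tower_cideal R1_ideal (@star_tower _ R1 A).
have [D [q [hq univ]]] := quotient_exists T1ci.
have R1D : R1 D `<=` [set 0].
  move=> y R1y; case: (hq) => _ _ qs _; have [x qx] := qs y.
  rewrite -qx; apply/(quot_ker hq)/star_step.
  by apply: (qpre_universal R1_stable (conj hq univ)); rewrite qx.
apply: star_le; [exact: T1ci.2 | exact: ideal0 T1ci.1 | move=> I TI IT1 x hx].
apply/(quot_ker hq)/(van _ R1D); case: (hq) => hh qc qs _.
apply: (qpre_hom R2_stable (tower_cideal R2_ideal TI) hh qc qs _ hx).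
by move=> z /IT1 /(quot_ker hq).
Qed.

End StarComparison.

Lemma hom_kills_closure_sum (R : realType) (A B : banach_algebra R) (S : set (set A))
  (g : A -> B) :
  is_hom g -> continuous g -> (forall I u, S I -> I u -> g u = 0) ->
  forall x, closure (sum_family S) x -> g x = 0.
Proof.
move=> hg gc gS x cx; apply: closure0_eq; apply: (continuous_closure gc _ cx) => _ [s [hs ->]].
rewrite (hom_sum hg) big_map big1_seq // => u /andP [_ us].
by have [I SI Iu] := hs u us; apply: gS Iu.
Qed.

Section RadicalFamilies.
Variable R : realType.
Variable F : ideal_map R -> Prop.
Hypothesis F_rad : forall Q, F Q -> is_topological_radical Q.

Lemma H_closed_ideal : is_closed_ideal_map (H_fam F).
Proof.
move=> A; split; last exact: closed_closure.
apply/closure_ideal/sum_family_ideal => I [Q FQ ->].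
exact: (radical_closed_ideal (F_rad FQ) A).1.
Qed.

Lemma H_stable : hom_stable (H_fam F).
Proof.
move=> A B f hf fc fs x; apply: (continuous_closure fc) => _ [s [hs ->]].
exists (map f s); split; last exact: hom_sum.
move=> _ /mapP [z zs ->]; have [I [Q FQ ->] Qz] := hs z zs.
by exists (Q B); [exists Q | apply: (radical_stable (F_rad FQ) hf fc fs)].
Qed.

Lemma H_sub Q : F Q -> forall A, Q A `<=` @H_fam _ F A.
Proof.
move=> FQ A x Qx; apply: subset_closure; exists [:: x]; split; last by rewrite big_seq1.
by move=> y; rewrite mem_seq1 => /eqP ->; exists (Q A) => //; exists Q.
Qed.

End RadicalFamilies.

Lemma H_mono (R : realType) (F1 F2 : ideal_map R -> Prop) :
  (forall Q, F1 Q -> F2 Q) -> le_imap (H_fam F1) (H_fam F2).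
Proof.
move=> F12 A; apply: closureS => x [s [hs ->]]; exists s; split => // y ys.
by have [I [Q FQ ->] Qy] := hs y ys; exists (Q A) => //; exists Q => //; apply: F12.
Qed.

Lemma iconv_ideal (R : realType) (M N : ideal_map R) :
  (forall B : banach_algebra R, is_ideal (M B)) ->
  forall B : banach_algebra R, is_ideal (@iconv _ M N B).
Proof. by move=> hM B; apply: qpre_ideal. Qed.

Section Proposition.
Variable R : realType.
Variables (F : ideal_map R -> Prop) (P : ideal_map R).
Arguments P : clear implicits.
Hypothesis F_rad : forall Q, F Q -> is_topological_radical Q.
Hypothesis FP : F P.
Let G := fun Q => F Q /\ Q <> P.

Let G_rad Q : G Q -> is_topological_radical Q.
Proof. by case=> /F_rad. Qed.

(* First inclusion: the quotient of A/H_G(A) by P is a quotient of A/H_F(A),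
   since H_F(A) is the closed sum of P(A) and the Q(A) with Q in G. *)
Lemma aH_le_conv : le_imap (a_map (H_fam F)) (iconv (a_map P) (H_fam G)).
Proof.
move=> A x hx B q hq C r hr; case: (hq) => hqh qc qs _; case: (hr) => hrh rc rs _.
apply: (qpre_hom (@Sigma_a_stable R) (H_closed_ideal F_rad A) (hom_comp hqh hrh) _ _ _ hx).
- exact: (fun z => continuous_comp (qc z) (rc (q z))).
- by move=> y; have [b <-] := rs y; have [a <-] := qs b; exists a.
move=> z hz; apply: (hom_kills_closure_sum (hom_comp hqh hrh) _ _ hz) => [w|I u [Q FQ ->] Qu /=].
  exact: continuous_comp (qc w) (rc (q w)).
have [QP|QnP] := pselect (Q = P).
  by apply/(quot_ker hr); rewrite -QP; apply: (radical_stable (F_rad FQ) hqh qc qs).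
by rewrite ((quot_ker hq u).1 (H_sub (conj FQ QnP) Qu)) (hom0 hrh).
Qed.

Lemma aH_vanishing (E : banach_algebra R) :
  @a_map _ (H_fam F) E `<=` [set 0] -> @iconv _ (a_map P) (H_fam G) E `<=` [set 0].
Proof.
move=> R1E y hy.
have HF0 z : @H_fam _ F E z -> z = 0 by move=> /(qpre_sub (@Sigma_a_ideal R)) /R1E.
have Sa0 z : @Sigma_a _ E z -> z = 0.
  by move=> /(stable_sub_qpre (@Sigma_a_stable R)) /R1E.
have zero_ideal (I : set E) : is_ideal I -> I `<=` @H_fam _ F E -> I = [set 0].
  by move=> hI IH; apply/seteqP; split => [z /IH /HF0 | z ->] //; apply: ideal0.
have HG0 : @H_fam _ G E = [set 0].
  exact: zero_ideal _ (H_closed_ideal G_rad E).1 (@H_mono _ G F (fun Q (GQ : G Q) => GQ.1) E).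
have PE0 : P E = [set 0].
  exact: zero_ideal _ (radical_closed_ideal (F_rad FP) E).1 (@H_sub _ _ _ FP E).
by move: hy => /(qpre_zero HG0) /(qpre_zero PE0) /Sa0.
Qed.

End Proposition.

Theorem proposition4p9 (R : realType) (F : ideal_map R -> Prop) (P : ideal_map R) :
  (forall Q, F Q -> is_topological_radical Q) ->
  F P ->
  le_imap (@Sigma_beta R) P ->
  let G := fun Q => F Q /\ Q <> P in
  le_imap (a_map (H_fam F)) (iconv (a_map P) (H_fam G)) /\
  conv_star (a_map (H_fam F)) = conv_star (iconv (a_map P) (H_fam G)).
Proof.
move=> F_rad FP _ G.
have G_rad Q : G Q -> is_topological_radical Q by case=> /F_rad.
have Sa_ideal := @Sigma_a_ideal R; have Sa_stable := @Sigma_a_stable R.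
have R1_ideal := iconv_ideal (H_fam F) Sa_ideal.
have R2_ideal := iconv_ideal (H_fam G) (iconv_ideal P Sa_ideal).
have R1_stable := iconv_stable Sa_stable (H_closed_ideal F_rad) (H_stable F_rad).
have aP_stable := iconv_stable Sa_stable (radical_closed_ideal (F_rad P FP))
  (radical_stable (F_rad P FP)).
have R2_stable := iconv_stable aP_stable (H_closed_ideal G_rad) (H_stable G_rad).
have le12 := aH_le_conv (P := P) F_rad.
split=> //; apply: functional_extensionality_dep => A; apply/seteqP; split.
- exact: (star_mono R1_ideal R2_ideal R1_stable le12).
- exact: (star_le_of_vanishing R1_ideal R2_ideal R1_stable R2_stable (aH_vanishing F_rad FP)).
Qed.
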